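(* Let $\mathbb{F}_2$ be the free group on two generators $x$ and $y$, and let $m,n$ be integers. Then the commutator $[x^m,y^n]=x^my^nx^{-m}y^{-n}$ is a product of two squares in $\mathbb{F}_2$ (i.e. $[x^m,y^n]=a^2b^2$ for some $a,b\in\mathbb{F}_2$) if and only if $mn$ is even.
   Context: For elements $g,h$ of a group, $[g,h]=ghg^{-1}h^{-1}$. *)

(* The free group F2 on generators x, y, realised as
   the set of freely reduced words, with product = concatenation followed
   by free reduction. *)
From HB Require Import structures.
From mathcomp Require Import all_boot all_order all_algebra.
Set Implicit Arguments. Unset Strict Implicit. Unset Printing Implicit Defensive.
Import Order.TTheory GRing.Theory Num.Theory.

(* A letter: (generator, inverted?) ; generator false = x, true = y. *)
Definition letter := (bool * bool)%type.
Definition linv (a : letter) : letter := (a.1, ~~ a.2).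

Definition reduced (w : seq letter) : bool :=
  sorted (fun a b : letter => b != linv a) w.

Definition cons_red (a : letter) (w : seq letter) : seq letter :=
  if w is b :: w' then (if b == linv a then w' else a :: w) else [:: a].

Lemma reduced_cons_red a w : reduced w -> reduced (cons_red a w).
Proof.
case: w => [//|b w] /=; case: ifP => [_ |/negbT nb].
  by case: w => //= c w /andP[].
by rewrite /reduced /= nb.
Qed.

Definition F2 := {w : seq letter | reduced w}.

Definition wmul (u v : seq letter) : seq letter := foldr cons_red v u.

Lemma reduced_wmul u v : reduced v -> reduced (wmul u v).
Proof. by elim: u => //= a u IH rv; apply: reduced_cons_red; apply: IH. Qed.

Definition F2mul (u v : F2) : F2 :=
  exist _ (wmul (proj1_sig u) (proj1_sig v)) (reduced_wmul _ (proj2_sig v)).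

Definition genpow (g : bool) (m : int) : seq letter := nseq `|m|%N (g, (m < 0)%R).

Lemma reduced_genpow g m : reduced (genpow g m).
Proof.
rewrite /reduced /genpow; set a := (g, _).
have ha : a != linv a by rewrite /linv /a xpair_eqE eqxx /=; case: (m < 0)%R.
elim: `|m|%N => //= k IH.
by case: k IH => //= k ->; rewrite ha.
Qed.

Definition F2pow (g : bool) (m : int) : F2 := exist _ (genpow g m) (reduced_genpow g m).
Definition F2x (m : int) : F2 := F2pow false m.
Definition F2y (m : int) : F2 := F2pow true m.

Definition comm_xy (m n : int) : F2 :=
  F2mul (F2x m) (F2mul (F2y n) (F2mul (F2x (- m)) (F2y (- n)))).

From mathcomp Require Import all_boot all_order all_algebra.
From mathcomp Require Import ring zify.
Import GRing.Theory Num.Theory.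
Local Open Scope ring_scope.

(* Sending x and y to the two standard generators of the integer Heisenberg
   group maps [x^m, y^n] to the central element m n.  If a^2 b^2 is central
   there, the abelianised images of a and b are opposite, and a direct
   computation shows that the central coordinate of a^2 b^2 is then even.
   Conversely, [x^(2k), y^n] = x^k x^k (y^n x^-k y^-n)^2 and
   [x^m, y^(2l)] = (x^m y^l x^-m)^2 y^-l y^-l. *)

Lemma linvK : involutive linv.
Proof. by case=> g b; rewrite /linv /= negbK. Qed.

Lemma cons_red_linvK a w : reduced w -> cons_red a (cons_red (linv a) w) = w.
Proof.
case: w => [|b w] /=; first by rewrite eqxx.
rewrite linvK; case: eqP => [-> |_] /=; last by rewrite eqxx.
by case: w => [//|c w]; rewrite /reduced /= => /andP[/negbTE ->].
Qed.

Lemma wmul_cons_red a u w : reduced w ->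
  wmul (cons_red a u) w = cons_red a (wmul u w).
Proof.
move=> rw; case: u => [//|b u] /=; case: eqP => [-> |_ //].
by rewrite cons_red_linvK // reduced_wmul.
Qed.

Lemma wmulA u v w : reduced w -> wmul (wmul u v) w = wmul u (wmul v w).
Proof. by move=> rw; elim: u => [//|a u IH] /=; rewrite wmul_cons_red // IH. Qed.

Lemma F2mulA (a b c : F2) : F2mul (F2mul a b) c = F2mul a (F2mul b c).
Proof. by apply: val_inj; apply: wmulA (proj2_sig c). Qed.

Lemma genpowS g (i : int) : genpow g (i + 1) = cons_red (g, false) (genpow g i).
Proof.
case: i => k.
  rewrite -PoszD addn1 /genpow /= ltz_nat.
  by case: k => [|k] //=; rewrite /linv /= xpair_eqE eqxx.
have -> : Negz k + 1 = - k%:Z by rewrite NegzE -addn1 PoszD opprD addrK.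
rewrite /genpow NegzE !abszN !absz_nat !oppr_lt0 !ltz_nat /= /linv /= eqxx.
by case: k.
Qed.

Lemma genpowB1 g (i : int) : genpow g (i - 1) = cons_red (g, true) (genpow g i).
Proof.
have -> : (g, true) = linv (g, false) by [].
by rewrite -{2}(subrK 1 i) genpowS cons_red_linvK // reduced_genpow.
Qed.

Lemma genpowD g (i j : int) : wmul (genpow g i) (genpow g j) = genpow g (i + j).
Proof.
elim/int_rec: i => [|k IH|k IH]; first by rewrite add0r.
  rewrite -addn1 PoszD genpowS wmul_cons_red ?reduced_genpow // IH.
  by rewrite -genpowS addrAC.
rewrite -addn1 PoszD opprD genpowB1 wmul_cons_red ?reduced_genpow // IH.
by rewrite -genpowB1 addrAC.
Qed.

Lemma F2pow0 g (a : F2) : F2mul (F2pow g 0) a = a.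
Proof. exact: val_inj. Qed.

Lemma F2powD g (i j : int) : F2mul (F2pow g i) (F2pow g j) = F2pow g (i + j).
Proof. by apply: val_inj; apply: genpowD. Qed.

Lemma F2powDl g (i j : int) (a : F2) :
  F2mul (F2pow g i) (F2mul (F2pow g j) a) = F2mul (F2pow g (i + j)) a.
Proof. by rewrite -F2mulA F2powD. Qed.

Lemma comm_xy_mul2l k n :
  let b := F2mul (F2y n) (F2mul (F2x (- k)) (F2y (- n))) in
  comm_xy (k * 2) n = F2mul (F2x k) (F2mul (F2x k) (F2mul b b)).
Proof.
rewrite /comm_xy /F2x /F2y !F2mulA !F2powDl addNr F2pow0 F2powDl.
by rewrite mulr_natr mulr2n opprD.
Qed.

Lemma comm_xy_mul2r m l :
  let a := F2mul (F2x m) (F2mul (F2y l) (F2x (- m))) in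
  comm_xy m (l * 2) = F2mul a (F2mul a (F2mul (F2y (- l)) (F2y (- l)))).
Proof.
rewrite /comm_xy /F2x /F2y !F2mulA !F2powDl addNr F2pow0 F2powDl.
by rewrite F2powD mulr_natr mulr2n opprD.
Qed.

(* [(a1, a2, a3)] encodes the unitriangular matrix [[1,a1,a3],[0,1,a2],[0,0,1]]. *)
Definition heis := (int * int * int)%type.

Definition heis_mul (a b : heis) : heis :=
  (a.1.1 + b.1.1, a.1.2 + b.1.2, a.2 + b.2 + a.1.1 * b.1.2).

Lemma heis_mulA (a b c : heis) : heis_mul (heis_mul a b) c = heis_mul a (heis_mul b c).
Proof.
case: a b c => [[a1 a2] a3] [[b1 b2] b3] [[c1 c2] c3].
rewrite /heis_mul /=; congr (_, _, _); ring.
Qed.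

Lemma heis_mul1l (a : heis) : heis_mul (0, 0, 0) a = a.
Proof. by case: a => [[a1 a2] a3]; rewrite /heis_mul /= !add0r mul0r addr0. Qed.

Lemma heis_sqr_mul_sqr_central (a b : heis) c :
  heis_mul (heis_mul a a) (heis_mul b b) = (0, 0, c) -> (2 %| c)%Z.
Proof.
case: a b => [[a1 a2] a3] [[b1 b2] b3]; rewrite /heis_mul /= => -[e1 e2 <-].
have -> : b1 = - a1 by lia.
have -> : b2 = - a2 by lia.
apply/dvdzP; exists (a3 + b3 - a1 * a2); ring.
Qed.

Definition heis_of_letter (l : letter) : heis :=
  let e := if l.2 then -1 else 1 in if l.1 then (0, e, 0) else (e, 0, 0).

Definition heis_of_word (w : seq letter) : heis :=
  foldr (fun l => heis_mul (heis_of_letter l)) (0, 0, 0) w.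

Lemma heis_of_cons_red a w :
  heis_of_word (cons_red a w) = heis_mul (heis_of_letter a) (heis_of_word w).
Proof.
case: w => [//|b w] /=; case: eqP => [-> |_ //].
rewrite -heis_mulA; case: (heis_of_word w) => [[c1 c2] c3].
by case: a => [[] []]; rewrite /heis_mul /heis_of_letter /=; congr (_, _, _); ring.
Qed.

Lemma heis_of_wmul u v :
  heis_of_word (wmul u v) = heis_mul (heis_of_word u) (heis_of_word v).
Proof.
elim: u => [|a u IH] /=; first by rewrite heis_mul1l.
by rewrite heis_of_cons_red IH heis_mulA.
Qed.

Lemma heis_of_genpow g (i : int) :
  heis_of_word (genpow g i) = if g then (0, i, 0) else (i, 0, 0).
Proof.
elim/int_rec: i => [|k IH|k IH]; first by case: g.
  rewrite -addn1 PoszD genpowS heis_of_cons_red IH.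
  by case: g {IH}; rewrite /heis_mul /heis_of_letter /=; congr (_, _, _); ring.
rewrite -addn1 PoszD opprD genpowB1 heis_of_cons_red IH.
by case: g {IH}; rewrite /heis_mul /heis_of_letter /=; congr (_, _, _); ring.
Qed.

Lemma heis_of_comm_xy m n : heis_of_word (val (comm_xy m n)) = (0, 0, m * n).
Proof.
rewrite /= !heis_of_wmul !heis_of_genpow /heis_mul /=; congr (_, _, _); ring.
Qed.

Lemma even_absz (c : int) : ~~ odd (absz c) = (2 %| c)%Z.
Proof. by rewrite dvdzE /= dvdn2. Qed.

Theorem theorem1p1 (m n : int) :
  (exists a b : F2, comm_xy m n = F2mul a (F2mul a (F2mul b b)))
  <-> ~~ odd (absz (m * n)%R).
Proof.
rewrite even_absz; split.
  move=> [a [b /(congr1 (heis_of_word \o val))]] /=.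
  rewrite heis_of_comm_xy !heis_of_wmul -heis_mulA => /esym.
  exact: heis_sqr_mul_sqr_central.
rewrite -even_absz abszM oddM negb_and !even_absz => /orP[/dvdzP[k ->]|/dvdzP[l ->]].
  by rewrite comm_xy_mul2l; eexists; eexists.
by rewrite comm_xy_mul2r; eexists; eexists.
Qed.
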